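(* Consider online multiclass classification with an arbitrary feedback graph $\mathcal{G}=([K],\mathcal{E})$, and suppose that for every round $t$ the loss $\ell_t=\ell(\cdot,\mathbf{x}_t,y_t)$ is a regular surrogate loss with respect to $\ell$. Run Gappletron on $\mathcal{G}$ (with any $\gamma\ge 0$ and any OCO algorithm $\mathcal{A}$) with a gap map $a:\mathbb{R}^{K\times d}\times\mathbb{R}^d\to[0,1]$ satisfying $a(\mathbf{W}_t,\mathbf{x}_t)=\ell(\mathbf{W}_t,\mathbf{x}_t,y_t^\star)$ for all $t$. Then for every round $t$, $$\sum_{y\in[K]} p_t'(y)\,\mathbb{1}[y\neq y_t]\;\le\;\frac{K-1}{K}\,\ell_t(\mathbf{W}_t)+\gamma_t .$$
   Context: Setting: for $t=1,\dots,T$ an oblivious adversary fixes $\mathbf{x}_t\in\mathbb{R}^d$ and $y_t\in[K]=\{1,\dots,K\}$; the learner sees $\mathbf{x}_t$ and predicts $y_t'\in[K]$. A feedback graph is a directed graph $\mathcal{G}=([K],\mathcal{E})$ in which every node has at least one incoming edge (self-loops allowed); $\mathrm{out}(y')=\{y:(y',y)\in\mathcal{E}\}$. After predicting $y_t'$ the learner observes the pairs $(y,\mathbb{1}[y\ne y_t])$ for $y\in\mathrm{out}(y_t')$ (so $y_t$ is learned iff $y_t\in\mathrm{out}(y_t')$); if a node has $K-1$ outgoing edges the missing edge is added. $\mathcal{Q}=\{y':\mathrm{out}(y')=[K]\}$ is the (possibly empty) set of revealing actions. A dominating set is $S\subseteq[K]$ such that every $y\in[K]$ lies in $\mathrm{out}(y')$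 for some $y'\in S$; $\rho$ is the minimum size of a dominating set and $S$ denotes a minimum dominating set. $\mathbf{1}$ is the all-ones vector, $\mathbf{1}_S$ the indicator vector of $S$, $\mathbf{e}_k$ the $k$-th basis vector of $\mathbb{R}^K$. $P_t,\mathbb{E}_t$ denote probability/expectation conditional on past predictions and feedback. Predictors $\mathbf{W}\in\mathcal{W}\subseteq\mathbb{R}^{K\times d}$ ($\mathcal{W}$ convex) with rows $\mathbf{W}^1,\dots,\mathbf{W}^K$, identified with vectors in $\mathbb{R}^{Kd}$; $\|\cdot\|$ is a fixed norm on $\mathbb{R}^{Kd}$. Let $\ell:\mathcal{W}\times\mathbb{R}^d\times[K]\to\mathbb{R}_+$ be convex in $\mathbf{W}$ and such that for all $\mathbf{W}\in\mathcal{W}$, $\mathbf{x}\in\mathbb{R}^d$ and all $y\ne y^\star:=\arg\max_k\langle \mathbf{W}^k,\mathbf{x}\rangle$: $\frac{K-1}{K}\ell(\mathbf{W},\mathbf{x},y)+\frac1K\ell(\mathbf{W},\mathbf{x},y^\star)\ge 1$. Then $\ell_t=\ell(\cdot,\mathbf{x}_t,y_t)$ is a regular surrogate loss (with constant $L>0$) if $\|\nabla\ell_t(\mathbf{W})\|^2\le 2L\,\ell_t(\mathbf{W})$ for all $\mathbf{W}\in\mathcal{W}$. Gappletron (inputs: $\mathcal{Q}$, $S$, an online convex optimization algorithm $\mathcal{A}$ on $\mathcal{W}$, $\gamma\ge0$, gap map $a$): $\mathbf{W}_1$ is output by $\mathcal{A}$. At round $t$: $y_t^\star=\arg\max_k\langle\mathbf{W}_t^k,\mathbf{x}_t\rangle$;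 $\gamma_t=0$ if $y_t^\star\in\mathcal{Q}$, else $\gamma_t=\min\{\tfrac12,\gamma/\sqrt{|\{s\le t:y_s^\star\notin\mathcal{Q}\}|}\}$; $a_t=a(\mathbf{W}_t,\mathbf{x}_t)$; $\zeta_t=\mathbb{1}[\gamma_t\le a_t]$; $\mathbf{p}_t'=(1-\zeta_t a_t-(1-\zeta_t)\gamma_t)\mathbf{e}_{y_t^\star}+\zeta_t a_t\frac1K\mathbf{1}+(1-\zeta_t)\frac{\gamma_t}{\rho}\mathbf{1}_S$; predict $y_t'\sim\mathbf{p}_t'$; set $v_t=\mathbb{1}[y_t\in\mathrm{out}(y_t')]/P_t(y_t\in\mathrm{out}(y_t'))$ and $\widehat\ell_t(\mathbf{W})=v_t\ell_t(\mathbf{W})$; feed $\widehat\ell_t$ to $\mathcal{A}$ and receive $\mathbf{W}_{t+1}$. *)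

From mathcomp Require Import all_boot all_order all_algebra.
Set Implicit Arguments. Unset Strict Implicit. Unset Printing Implicit Defensive.
Import Order.TTheory GRing.Theory Num.Theory.
Local Open Scope ring_scope.

Section Gap.
Variable R : rcfType.
Variables K d : nat.

Definition out (E : rel 'I_K) (y' : 'I_K) : {set 'I_K} := [set y | E y' y].

(* Convention: a node with K-1 outgoing edges gets its missing edge added. *)
Definition out_eff (E : rel 'I_K) (y' : 'I_K) : {set 'I_K} :=
  if #|out E y'| == K.-1 then [set: 'I_K] else out E y'.

Definition feedback_graph (E : rel 'I_K) : Prop :=
  forall y : 'I_K, exists y' : 'I_K, E y' y.

Definition revealing (E : rel 'I_K) : {set 'I_K} :=
  [set y' | out_eff E y' == [set: 'I_K]].

Definition dominating (E : rel 'I_K) (S : {set 'I_K}) : Prop :=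
  forall y : 'I_K, exists2 y', y' \in S & y \in out_eff E y'.

Definition min_dominating (E : rel 'I_K) (S : {set 'I_K}) : Prop :=
  dominating E S /\ forall S', dominating E S' -> (#|S| <= #|S'|)%N.

Definition score (W : 'M[R]_(K, d)) (x : 'rV[R]_d) (k : 'I_K) : R :=
  \sum_(j < d) W k j * x 0 j.

Definition is_argmax_selector (ystar : 'M[R]_(K, d) -> 'rV[R]_d -> 'I_K) : Prop :=
  forall W x k, score W x k <= score W x (ystar W x).

Definition n_nonrev (Q : {set 'I_K}) (ys : nat -> 'I_K) (t : nat) : nat :=
  \sum_(1 <= s < t.+1) (ys s \notin Q).

Definition gamma_t (Q : {set 'I_K}) (gamma : R) (ys : nat -> 'I_K) (t : nat) : R :=
  if ys t \in Q then 0
  else Num.min (2^-1) (gamma / Num.sqrt (n_nonrev Q ys t)%:R).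

Definition p_prime (ystar_t : 'I_K) (S : {set 'I_K}) (gt at_ : R) (y : 'I_K) : R :=
  let zeta : R := ((gt <= at_)%R)%:R in
  (1 - zeta * at_ - (1 - zeta) * gt) * (y == ystar_t)%:R
  + zeta * at_ / K%:R
  + (1 - zeta) * gt / (#|S|)%:R * (y \in S)%:R.

End Gap.

From mathcomp Require Import all_boot all_order all_algebra.
From mathcomp Require Import ring lra.
Import Order.TTheory GRing.Theory Num.Theory.
Local Open Scope ring_scope.

(* Write a for the gap a_t = ell(W_t, x_t, y*_t) and L for ell_t(W_t).
   If gamma_t <= a, the prediction mixes y* with the uniform law with weight a,
   so the mistake mass is a (K-1)/K = (K-1)/K L when y* = y_t, and 1 - a/K
   otherwise, which the defining property of ell bounds by (K-1)/K L.
   If a < gamma_t, the exploration on S costs at most gamma_t beyond the mass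
   left on y*, so the mistake mass is at most gamma_t when y* = y_t and at most
   1 otherwise; and 1 <= (K-1)/K L + a/K < (K-1)/K L + gamma_t. *)

Section IndicatorSums.
Variables (R : numDomainType) (K : nat).

Lemma sum_indicator_neq (y0 : 'I_K) :
  \sum_(y < K) (y != y0)%:R = (K.-1)%:R :> R.
Proof.
rewrite (bigD1 y0) //= eqxx add0r (eq_bigr (fun=> 1)) => [|y /negbTE -> //].
by rewrite sumr_const cardC1 card_ord.
Qed.

Lemma sum_pointmass_neq (y1 y0 : 'I_K) :
  \sum_(y < K) (y == y1)%:R * (y != y0)%:R = (y1 != y0)%:R :> R.
Proof.
rewrite (bigD1 y1) //= eqxx mul1r big1 ?addr0 // => y /negbTE ->.
by rewrite mul0r.
Qed.

Lemma sum_set_neq_le (S : {set 'I_K}) (y0 : 'I_K) :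
  \sum_(y < K) (y \in S)%:R * (y != y0)%:R <= #|S|%:R :> R.
Proof.
rewrite -sum1_card natr_sum [leRHS]big_mkcond ler_sum // => y _.
by case: (y \in S); case: (y != y0); rewrite ?mulr1 ?mulr0.
Qed.

End IndicatorSums.

Lemma natr_pred_div (F : numFieldType) (n : nat) : (0 < n)%N ->
  n.-1%:R / n%:R = 1 - n%:R^-1 :> F.
Proof.
by move=> n_gt0; rewrite -subn1 natrB // mulrBl mul1r divff // pnatr_eq0 -lt0n.
Qed.

Lemma gamma_t_ge0 (R : rcfType) (K : nat) (Q : {set 'I_K}) (gamma : R)
    (ys : nat -> 'I_K) (t : nat) :
  0 <= gamma -> 0 <= gamma_t Q gamma ys t.
Proof.
move=> gamma_ge0; rewrite /gamma_t; case: ifP => // _.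
by rewrite le_min invr_ge0 ler0n divr_ge0 // sqrtr_ge0.
Qed.

Section MistakeMass.
Variables (R : rcfType) (K : nat) (S : {set 'I_K}) (ystar y : 'I_K) (g A : R).

Lemma mistake_mass_p_prime_uniform : g <= A ->
  \sum_(y' < K) p_prime ystar S g A y' * (y' != y)%:R
    = (1 - A) * (ystar != y)%:R + A * (K.-1)%:R / K%:R.
Proof.
move=> g_le_A.
rewrite -(sum_pointmass_neq R K ystar y) -(sum_indicator_neq R K y).
rewrite mulr_sumr mulrAC mulr_sumr -big_split /=; apply: eq_bigr => y' _.
rewrite /p_prime g_le_A /=; ring.
Qed.

Lemma mistake_mass_p_prime_dominating : A < g -> 0 <= g ->
  \sum_(y' < K) p_prime ystar S g A y' * (y' != y)%:R
    <= (1 - g) * (ystar != y)%:R + g.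
Proof.
move=> A_lt_g g_ge0.
have -> : \sum_(y' < K) p_prime ystar S g A y' * (y' != y)%:R
    = (1 - g) * (ystar != y)%:R
      + g / #|S|%:R * \sum_(y' < K) (y' \in S)%:R * (y' != y)%:R.
  rewrite -(sum_pointmass_neq R K ystar y) !mulr_sumr -big_split /=.
  apply: eq_bigr => y' _.
  rewrite /p_prime lt_geF //=; ring.
rewrite lerD2l; have [->|S_gt0] := posnP #|S|.
  by rewrite invr0 mulr0 mul0r.
rewrite -mulrA ler_piMr // ler_pdivrMl ?ltr0n // mulr1.
exact: sum_set_neq_le.
Qed.

End MistakeMass.

Theorem lemma1 (R : rcfType) (K d : nat)
  (E : rel 'I_K) (S : {set 'I_K})
  (Wset : 'M[R]_(K, d) -> Prop)
  (ell : 'M[R]_(K, d) -> 'rV[R]_d -> 'I_K -> R)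
  (ystar : 'M[R]_(K, d) -> 'rV[R]_d -> 'I_K)
  (a : 'M[R]_(K, d) -> 'rV[R]_d -> R)
  (gamma : R)
  (Ws : nat -> 'M[R]_(K, d)) (xs : nat -> 'rV[R]_d) (ys : nat -> 'I_K)
  (t : nat) :
  feedback_graph E ->
  min_dominating E S ->
  (* W convex *)
  (forall W1 W2 (lam : R), Wset W1 -> Wset W2 -> 0 <= lam <= 1 ->
     Wset (lam *: W1 + (1 - lam) *: W2)) ->
  (* ell nonnegative and convex in W *)
  (forall W x y, Wset W -> 0 <= ell W x y) ->
  (forall W1 W2 x y (lam : R), Wset W1 -> Wset W2 -> 0 <= lam <= 1 ->
     ell (lam *: W1 + (1 - lam) *: W2) x y
       <= lam * ell W1 x y + (1 - lam) * ell W2 x y) ->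
  is_argmax_selector ystar ->
  (* defining property of ell *)
  (forall W x y, Wset W -> y != ystar W x ->
     1 <= (K.-1)%:R / K%:R * ell W x y + K%:R^-1 * ell W x (ystar W x)) ->
  0 <= gamma ->
  (forall s, Wset (Ws s)) ->
  (* gap map a : values in [0,1], equal to ell(W_s, x_s, y*_s) *)
  (forall W x, 0 <= a W x <= 1) ->
  (forall s, a (Ws s) (xs s) = ell (Ws s) (xs s) (ystar (Ws s) (xs s))) ->
  (1 <= t)%N ->
  let yst := fun s => ystar (Ws s) (xs s) in
  let gt := gamma_t (revealing E) gamma yst t in
  \sum_(y < K) p_prime (yst t) S gt (a (Ws t) (xs t)) y * (y != ys t)%:R
    <= (K.-1)%:R / K%:R * ell (Ws t) (xs t) (ys t) + gt.
Proof.
move=> _ _ _ ell_ge0 _ _ ell_surrogate gamma_ge0 Ws_in a01 a_ell _ /=.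
set yst := fun s => ystar (Ws s) (xs s); set gt := gamma_t _ _ _ t.
set A := a (Ws t) (xs t); set L := ell (Ws t) (xs t) (ys t).
have gt_ge0 : 0 <= gt by exact: gamma_t_ge0.
have [A_ge0 _] := andP (a01 (Ws t) (xs t)).
have L_ge0 : 0 <= L by exact: ell_ge0.
have K_gt0 : (0 < K)%N := leq_ltn_trans (leq0n _) (ltn_ord (ys t)).
set c : R := (K.-1)%:R / K%:R.
have invK : K%:R^-1 = 1 - c by rewrite /c natr_pred_div // opprB addrC subrK.
have Ac_ge0 : 0 <= A * c by rewrite mulr_ge0 ?divr_ge0.
have surrogate : yst t != ys t -> 1 <= c * L + A * (1 - c).
  by move=> ne; rewrite -invK [A * _]mulrC /A a_ell ell_surrogate // eq_sym.
have [g_le_A | A_lt_g] := lerP gt A.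
- rewrite mistake_mass_p_prime_uniform // -mulrA -/c.
  have [eq_y | ne_y] := eqVneq (yst t) (ys t).
  + have -> : A = L by rewrite /A /L a_ell -eq_y.
    rewrite mulr0 add0r mulrC lerDl //.
  + have := surrogate ne_y; rewrite mulr1; lra.
- apply: le_trans; first exact: mistake_mass_p_prime_dominating.
  have [eq_y | ne_y] := eqVneq (yst t) (ys t).
  + by rewrite mulr0 add0r lerDr -/c mulr_ge0 ?divr_ge0.
  + have := surrogate ne_y; rewrite mulr1 -/c; lra.
Qed.
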